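(* Let $m,n\in\mathbb{N}$ and let $G=K_{1,m,n}$ be the complete tripartite graph with parts of sizes $1,m,n$. Then: (1) if $m=1$, $G$ is an $\mathcal{N}$ position for Grim if and only if $n$ is even; (2) if $m=2$ and $n\geq 2$, $G$ is an $\mathcal{N}$ position; (3) if $m,n\geq 3$, $G$ is an $\mathcal{N}$ position if and only if $m+n$ is even.
   Context: Grim is a two-player game on a finite simple undirected graph. Any isolated vertices of the starting graph are deleted before play begins. Players alternate moves; a move consists of selecting a vertex of the current graph and deleting it together with all its incident edges, after which every vertex that has become isolated is also deleted. The player who makes the last legal move wins (a player facing the empty graph has no move and loses). A graph is an $\mathcal{N}$ position if the player about to move has a winning strategy, and a $\mathcal{P}$ position otherwise. *)

From mathcomp Require Import all_boot.


(* A finite simple graph: vertex type T : finType, edge relation e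
   (assumed symmetric and irreflexive where relevant).  A position of Grim
   is a vertex set S : {set T}; the current graph is the induced subgraph. *)

Definition has_nbr (T : finType) (e : rel T) (S : {set T}) (v : T) : bool :=
  [exists u in S, e v u].

Definition del_isolated (T : finType) (e : rel T) (S : {set T}) : {set T} :=
  [set v in S | @has_nbr T e S v].

Definition grim_move (T : finType) (e : rel T) (S : {set T}) (v : T) : {set T} :=
  @del_isolated T e (S :\ v).

Fixpoint grim_win_fuel (T : finType) (e : rel T) (k : nat) (S : {set T}) : bool :=
  match k with
  | 0 => false
  | k'.+1 => [exists v in S, ~~ @grim_win_fuel T e k' (@grim_move T e S v)]
  end.

(* every move strictly decreases #|S|, so fuel #|S| suffices *)
Definition grim_N_pos (T : finType) (e : rel T) (S : {set T}) : bool :=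
  @grim_win_fuel T e #|S| S.

Definition grim_N (T : finType) (e : rel T) : bool :=
  @grim_N_pos T e (@del_isolated T e [set: T]).

(* complete tripartite graph K_{1,m,n} on 'I_(1+m+n):
   part 0 = {0}, part 1 = {1..m}, part 2 = {m+1..m+n} *)
Definition tri_part (m n : nat) (i : 'I_(1 + m + n)) : nat :=
  if (i < 1)%N then 0 else if (i < 1 + m)%N then 1 else 2.

Definition K1mn (m n : nat) : rel 'I_(1 + m + n) :=
  fun i j => @tri_part m n i != @tri_part m n j.
Arguments K1mn m n : clear implicits.
Arguments grim_N {T} e.

From mathcomp Require Import all_boot.

Arguments del_isolated {T}.
Arguments grim_move {T}.
Arguments grim_win_fuel {T}.

(* On a complete multipartite graph a move shrinks one part by a vertex, and
   a position vanishes exactly when at most one part is left nonempty.  Hence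
   a position is determined by its part sizes, and for sizes a <= 1, b, c the
   N-positions are those with [grim3_N a b c]: K_{b,c} is an N-position iff
   b or c is 1 or b + c is odd, and K_{1,b,c} iff it is a star, or b = 1 and
   c is even (or vice versa), or b or c is 2, or b, c >= 3 and b + c is even.
   That this predicate satisfies the Grim recursion is a finite check on
   small sizes and parities. *)

Definition bipartite_N (b c : nat) : bool :=
  [&& 0 < b, 0 < c & [|| b == 1, c == 1 | odd (b + c)]].

Definition tripartite_N (b c : nat) : bool :=
  if b == 0 then 0 < c else if c == 0 then 0 < b
  else if b == 1 then ~~ odd c else if c == 1 then ~~ odd b
  else [|| b == 2, c == 2 | ~~ odd (b + c)].

Definition grim3_N (a b c : nat) : bool :=
  if a == 0 then bipartite_N b c else tripartite_N b c.

Definition grim3_trivial (a b c : nat) : bool := (0 < a) + (0 < b) + (0 < c) <= 1.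

Definition grim3_has_P_option (a b c : nat) : bool :=
  [|| (0 < a) && ~~ grim3_N a.-1 b c,
      (0 < b) && ~~ grim3_N a b.-1 c
    | (0 < c) && ~~ grim3_N a b c.-1].

Lemma grim3_NE a b c : a <= 1 ->
  grim3_N a b c = ~~ grim3_trivial a b c && grim3_has_P_option a b c.
Proof.
case: a => [|[|//]] _; case: b => [|[|[|[|b]]]]; case: c => [|[|[|[|c]]]];
rewrite /grim3_has_P_option /grim3_N /bipartite_N /tripartite_N /=
  ?addnS ?addSn /= ?oddD ?addn0 //=;
by try case: (odd b); try case: (odd c).
Qed.

Lemma grim3_N_trivial a b c : grim3_trivial a b c -> grim3_N a b c = false.
Proof. by case: a => [|a]; case: b => [|b]; case: c => [|c]. Qed.

Lemma card_ord_range N a b : a <= b <= N -> #|[set i : 'I_N | a <= i < b]| = b - a.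
Proof.
case/andP=> le_ab le_bN.
rewrite -sum1_card big_mkcond /=.
rewrite (eq_bigr (fun i : 'I_N => nat_of_bool (a <= i < b))) => [|i _]; last first.
  by rewrite inE; case: ifP.
rewrite -(big_mkord xpredT (fun i => nat_of_bool (a <= i < b))).
rewrite (big_cat_nat (leq0n a) (leq_trans le_ab le_bN)) (big_cat_nat le_ab le_bN) /=.
rewrite [X in X + _]big1_seq => [|i /andP[_]]; last first.
  by rewrite mem_index_iota /= ltnNge => /negbTE ->.
rewrite [X in _ + (_ + X)]big1_seq => [|i /andP[_]]; last first.
  by rewrite mem_index_iota => /andP[le_bi _]; rewrite ltnNge le_bi andbF.
rewrite (eq_big_nat _ _ (F2 := fun _ => 1)) => [|i /andP[-> ->]] //.
by rewrite sum_nat_const_nat muln1 addn0.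
Qed.

Lemma del_isolated_sub (T : finType) (e : rel T) (S : {set T}) :
  del_isolated e S \subset S.
Proof. by apply/subsetP => v; rewrite inE => /andP[]. Qed.

Section CompleteTripartite.

Variables (T : finType) (part : T -> nat).

Definition multipartite : rel T := fun u v => part u != part v.

Definition part_card (S : {set T}) (p : nat) : nat := #|[set v in S | part v == p]|.

Definition grim3_set_trivial (S : {set T}) : bool :=
  grim3_trivial (part_card S 0) (part_card S 1) (part_card S 2).

Definition grim3_set_N (S : {set T}) : bool :=
  grim3_N (part_card S 0) (part_card S 1) (part_card S 2).

Lemma part_card0 p : part_card set0 p = 0.
Proof. by apply: eq_card0 => v; rewrite !inE. Qed.

Lemma part_card_sub (S S' : {set T}) p :
  S \subset S' -> part_card S p <= part_card S' p.
Proof.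
move=> /subsetP sub_SS'; apply/subset_leq_card/subsetP => v.
by rewrite !inE => /andP[/sub_SS' -> ->].
Qed.

Lemma part_card_gt0 {S : {set T}} {v : T} : v \in S -> 0 < part_card S (part v).
Proof. by move=> vS; rewrite card_gt0; apply/set0Pn; exists v; rewrite inE vS eqxx. Qed.

Lemma part_card_gt0P {S : {set T}} {p : nat} :
  0 < part_card S p -> exists2 u, u \in S & part u = p.
Proof. by rewrite card_gt0 => /set0Pn[u]; rewrite inE => /andP[uS /eqP]; exists u. Qed.

Lemma part_cardD1 (S : {set T}) v p : v \in S ->
  part_card (S :\ v) p = if part v == p then (part_card S p).-1 else part_card S p.
Proof.
move=> vS; rewrite /part_card; case: ifP => pv.
  have -> : [set u in S :\ v | part u == p] = [set u in S | part u == p] :\ v.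
    by apply/setP => u; rewrite !inE andbA.
  by rewrite (cardsD1 v [set u in S | part u == p]) inE vS pv.
apply: eq_card => u; rewrite !inE.
by case: (eqVneq u v) => [->|]; rewrite ?pv ?andbF.
Qed.

Hypothesis part_lt3 : forall v, part v < 3.

Lemma del_isolated_multipartite (S : {set T}) :
  del_isolated multipartite S = if grim3_set_trivial S then set0 else S.
Proof.
apply/setP => v; rewrite /del_isolated /has_nbr inE.
have := part_lt3 v; case: ifP => triv lt3; rewrite ?inE.
  apply/negP => /andP[vS /exists_inP[u uS neq_uv]].
  move: (part_card_gt0 vS) (part_card_gt0 uS) (part_lt3 u) lt3 neq_uv triv.
  rewrite /grim3_set_trivial /grim3_trivial /multipartite.
  case: (part v) => [|[|[|//]]]; case: (part u) => [|[|[|//]]] //;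
  by case: (part_card S 0) => [|?]; case: (part_card S 1) => [|?];
     case: (part_card S 2) => [|?].
case vS: (v \in S) => //=.
have [p neq_pv card_p] : exists2 p, part v != p & 0 < part_card S p.
  move: triv lt3; rewrite /grim3_set_trivial /grim3_trivial.
  case: (part v) => [|[|[|//]]]; case c0: (part_card S 0) => [|?];
  case c1: (part_card S 1) => [|?]; case c2: (part_card S 2) => [|?] //= _ _;
  by [exists 0; rewrite ?c0 | exists 1; rewrite ?c1 | exists 2; rewrite ?c2].
have [u uS pu] := part_card_gt0P card_p.
by apply/exists_inP; exists u; rewrite // /multipartite pu.
Qed.

Lemma del_isolated_multipartite_id (S : {set T}) :
  del_isolated multipartite (del_isolated multipartite S)
  = del_isolated multipartite S.
Proof.
rewrite (del_isolated_multipartite S); case: ifP => triv.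
  by rewrite del_isolated_multipartite /grim3_set_trivial !part_card0.
by rewrite del_isolated_multipartite triv.
Qed.

Hypothesis part0_le1 : part_card [set: T] 0 <= 1.

Lemma part_card0_le1 (S : {set T}) : part_card S 0 <= 1.
Proof. exact/(leq_trans _ part0_le1)/part_card_sub/subsetT. Qed.

Lemma grim3_set_N_del_isolated (S : {set T}) :
  grim3_set_N (del_isolated multipartite S) = grim3_set_N S.
Proof.
rewrite del_isolated_multipartite; case: ifP => // triv.
by rewrite /grim3_set_N !part_card0 grim3_N_trivial // grim3_N_trivial.
Qed.

Lemma grim3_set_N_move (S : {set T}) :
  grim3_set_N S = ~~ grim3_set_trivial S &&
    [exists v in S, ~~ grim3_set_N (S :\ v)].
Proof.
rewrite /grim3_set_N grim3_NE ?part_card0_le1 //; congr (_ && _).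
apply/idP/exists_inP.
  by case/or3P=> /andP[/part_card_gt0P[u uS pu] Pu]; exists u;
     rewrite // !part_cardD1 // pu.
case=> v vS; rewrite /grim3_has_P_option !part_cardD1 //; have := part_card_gt0 vS.
by have := part_lt3 v; case: (part v) => [|[|[|//]]] _ /= -> ->; rewrite ?orbT.
Qed.

Lemma grim_win_fuel_multipartite k (S : {set T}) :
  del_isolated multipartite S = S -> #|S| <= k ->
  grim_win_fuel multipartite k S = grim3_set_N S.
Proof.
elim: k S => [|k IHk] S normS leSk.
  move: leSk; rewrite leqn0 cards_eq0 => /eqP->.
  by rewrite /grim3_set_N !part_card0.
have win_move v : v \in S ->
    grim_win_fuel multipartite k (grim_move multipartite S v) = grim3_set_N (S :\ v).
  move=> vS; rewrite IHk /grim_move ?del_isolated_multipartite_id ?grim3_set_N_del_isolated //.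
  apply: leq_trans (subset_leq_card _) _; first exact: del_isolated_sub.
  by move: leSk; rewrite (cardsD1 v) vS.
rewrite grim3_set_N_move.
have -> : ~~ grim3_set_trivial S = (S != set0).
  apply/idP/idP => [|nzS].
    by apply: contraNneq => ->; rewrite /grim3_set_trivial !part_card0.
  by apply: contra nzS => triv; rewrite -normS del_isolated_multipartite triv.
case: (eqVneq S set0) => [->|_] /=.
  by apply/negbTE/negP => /exists_inP[v]; rewrite inE.
by apply: eq_existsb => v; case vS: (v \in S); rewrite //= win_move.
Qed.

End CompleteTripartite.

Arguments multipartite {T}.
Arguments part_card {T}.
Arguments grim3_set_N {T}.

Lemma part_card_K1mn m n p : p < 3 ->
  part_card (tri_part m n) [set: 'I_(1 + m + n)] p = nth 0 [:: 1; m; n] p.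
Proof.
have range lo hi : lo <= hi <= 1 + m + n ->
    (forall i : 'I_(1 + m + n), (tri_part m n i == p) = (lo <= i < hi)) ->
    part_card (tri_part m n) [set: _] p = hi - lo.
  move=> le_lohi tri_partE; rewrite -(card_ord_range _ _ _ le_lohi).
  by apply: eq_card => i; rewrite !inE tri_partE.
case: p range => [|[|[|//]]] range _.
- by rewrite (range 0 1) // => i; rewrite /tri_part; case: ifP => //; case: ifP.
- rewrite (range 1 (1 + m)) ?addKn ?leq_addl ?leq_addr // => i.
  by rewrite /tri_part lt0n; case: (i : nat) => [|j] //=; case: ifP.
- rewrite (range (1 + m) (1 + m + n)) ?addKn ?leq_addr ?leqnn // => i.
  rewrite /tri_part ltn_ord andbT; case: (ltnP i 1) => [lt_i1|_].
    by rewrite leqNgt (leq_trans lt_i1) ?leq_addr.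
  by case: ltnP.
Qed.

Lemma grim_N_K1mn m n : grim_N (K1mn m n) = grim3_N 1 m n.
Proof.
have part_lt3 (i : 'I_(1 + m + n)) : tri_part m n i < 3.
  by rewrite /tri_part; case: ifP => //; case: ifP.
rewrite /grim_N /grim_N_pos.
change (K1mn m n) with (multipartite (tri_part m n)).
rewrite grim_win_fuel_multipartite ?del_isolated_multipartite_id ?part_card_K1mn //.
rewrite grim3_set_N_del_isolated // /grim3_set_N.
by rewrite !part_card_K1mn.
Qed.

Theorem lemma3p3 (m n : nat) :
  (m = 1 -> (grim_N (K1mn m n) <-> ~~ odd n)) /\
  (m = 2 -> 2 <= n -> grim_N (K1mn m n)) /\
  (3 <= m -> 3 <= n -> (grim_N (K1mn m n) <-> ~~ odd (m + n))).
Proof.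
rewrite grim_N_K1mn /grim3_N /tripartite_N /=; split; [|split].
- by move=> ->; case: n.
- by move=> ->; case: n => [|[|n]].
- by case: m => [|[|[|m]]] // _; case: n => [|[|[|n]]].
Qed.
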